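(* Fix $n\ge 1$. For every $x\in \mathcal{NM}_n$, the idempotent Euler characteristic satisfies $\chi^+(x\odot x)=\chi^+(x)$.
   Context: An NM algebra is an algebra $\langle A,\wedge,\vee,\odot,\to,\bot,\top\rangle$ such that $(A,\wedge,\vee,\bot,\top)$ is a bounded lattice, $\langle A,\odot,\top\rangle$ is a commutative monoid, and for all $x,y,z$: $x\odot y\le z$ iff $x\le y\to z$; $(x\to y)\vee(y\to x)=\top$; $\neg(x\odot y)\vee((x\wedge y)\to(x\odot y))=\top$ where $\neg x:=x\to\bot$; and $\neg\neg x=x$. $\mathcal{NM}_n$ denotes the free NM algebra on $n$ generators, i.e. the Lindenbaum algebra of formulas of Nilpotent Minimum logic in the variables $x_1,\dots,x_n$ modulo logical equivalence; equivalently, the subalgebra of $[0,1]^{[0,1]^n}$ generated by the coordinate projections, where $[0,1]$ carries the standard NM operations ($\wedge=\min$, $\vee=\max$, $x\odot y=\min(x,y)$ if $x+y>1$ and $0$ otherwise, $x\to y=1$ if $x\le y$ and $\max(1-x,y)$ otherwise). It is a finite distributive lattice. A valuation on a distributive lattice $L$ is a map $\nu:L\to\mathbb{R}$ with $\nu(x)+\nu(y)=\nu(x\vee y)+\nu(x\wedge y)$ for all $x,y$; on a finite distributive lattice a valuation is uniquely determined by its values on join-irreducible elements and on the bottom $\bot$. An element is join-irreducible if it is not $\bot$ and $x=y\vee z$ implies $x=y$ or $x=z$. The idempotent Euler characteristic $\chi^+:\mathcal{NM}_n\to\mathbb{R}$ is the unique valuation with $\chi^+(\bot)=0$ and, for each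 join-irreducible $g$, $\chi^+(g)=1$ if $g\odot g=g$ and $\chi^+(g)=0$ otherwise. *)

From Stdlib Require Import Reals Lra.
From Stdlib Require Vectors.Fin.
Open Scope R_scope.

Definition nm_mul (x y : R) : R := if Rlt_dec 1 (x + y) then Rmin x y else 0.
Definition nm_imp (x y : R) : R := if Rle_dec x y then 1 else Rmax (1 - x) y.

Inductive form (n : nat) : Type :=
| Var : Fin.t n -> form n
| Bot : form n
| Top : form n
| And : form n -> form n -> form n
| Or  : form n -> form n -> form n
| Mul : form n -> form n -> form n
| Imp : form n -> form n -> form n.
Arguments Var {n} _.
Arguments Bot {n}.
Arguments Top {n}.
Arguments And {n} _ _.
Arguments Or {n} _ _.
Arguments Mul {n} _ _.
Arguments Imp {n} _ _.

Fixpoint eval {n : nat} (v : Fin.t n -> R) (f : form n) : R :=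
  match f with
  | Var i => v i
  | Bot => 0
  | Top => 1
  | And a b => Rmin (eval v a) (eval v b)
  | Or a b => Rmax (eval v a) (eval v b)
  | Mul a b => nm_mul (eval v a) (eval v b)
  | Imp a b => nm_imp (eval v a) (eval v b)
  end.

Definition unit_cube {n : nat} (v : Fin.t n -> R) : Prop :=
  forall i, 0 <= v i <= 1.

(** Logical equivalence = equality as functions on [0,1]^n.
    NM_n is the quotient of [form n] by [equiv]. *)
Definition equiv {n : nat} (f g : form n) : Prop :=
  forall v, unit_cube v -> eval v f = eval v g.

Definition join_irreducible {n : nat} (g : form n) : Prop :=
  ~ equiv g Bot /\
  forall a b : form n, equiv g (Or a b) -> equiv g a \/ equiv g b.

Definition idempotent {n : nat} (g : form n) : Prop := equiv (Mul g g) g.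

Definition valuation {n : nat} (nu : form n -> R) : Prop :=
  (forall f g, equiv f g -> nu f = nu g) /\
  (forall f g, nu f + nu g = nu (Or f g) + nu (And f g)).

Definition is_chi_plus {n : nat} (nu : form n -> R) : Prop :=
  valuation nu /\ nu Bot = 0 /\
  (forall g, join_irreducible g -> idempotent g -> nu g = 1) /\
  (forall g, join_irreducible g -> ~ idempotent g -> nu g = 0).

(* At a point v of the cube every formula takes one of the values 0, 1, v_i, 1 - v_i.
   Relabelling these finitely many values by their (doubled) rank respects min, max and
   the involution x |-> 1 - x, hence commutes with evaluation; the relabelled point lies
   in a fixed finite grid, so formulas agreeing on the grid are equivalent and NM_n is a
   finite distributive lattice.  There chi^+ is obtained by Moebius inversion over the
   join-irreducibles.  For the identity, x = (x ⊙ x) ∨ (x ∧ ¬x), and x ∧ ¬x <= 1/2.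
   Every element z <= 1/2 has chi^+(z) = 0: a join-irreducible such z is not idempotent
   since z ⊙ z = 0, and otherwise z splits as a join of strictly smaller elements.
   The valuation identity for x ⊙ x and x ∧ ¬x then gives chi^+(x ⊙ x) = chi^+(x). *)
From Stdlib Require Import Reals Lra Lia Arith Bool List Permutation ClassicalEpsilon Classical.
From Stdlib Require Vectors.Fin.
Import ListNotations.
Open Scope R_scope.

Ltac case_R := repeat match goal with
  | |- context [Rle_dec ?a ?b] => destruct (Rle_dec a b)
  | |- context [Rlt_dec ?a ?b] => destruct (Rlt_dec a b)
  | H : context [Rle_dec ?a ?b] |- _ => destruct (Rle_dec a b)
  | H : context [Rlt_dec ?a ?b] |- _ => destruct (Rlt_dec a b) end.

Ltac nm_arith := simpl in *; unfold nm_mul, nm_imp, Rmin, Rmax in *; case_R; lra.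

(** * Values of a formula at a point *)

Fixpoint enum_fin (n : nat) : list (Fin.t n) :=
  match n with O => [] | S m => Fin.F1 :: map Fin.FS (enum_fin m) end.

Lemma enum_fin_complete n (i : Fin.t n) : In i (enum_fin n).
Proof. induction i; simpl; [left; reflexivity | right; apply in_map; auto]. Qed.

Lemma enum_fin_length n : length (enum_fin n) = n.
Proof. induction n; simpl; auto. rewrite length_map; auto. Qed.

Definition point_values {n} (v : Fin.t n -> R) : list R :=
  0 :: 1 :: flat_map (fun i => [v i; 1 - v i]) (enum_fin n).

Lemma point_values_length {n} (v : Fin.t n -> R) : length (point_values v) = (2 + 2 * n)%nat.
Proof.
  assert (Hl : forall l : list (Fin.t n),
    length (flat_map (fun i => [v i; 1 - v i]) l) = (2 * length l)%nat)
    by (induction l; simpl; lia).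
  unfold point_values; simpl. rewrite Hl, enum_fin_length. lia.
Qed.

Lemma point_values_0 {n} (v : Fin.t n -> R) : In 0 (point_values v).
Proof. left; reflexivity. Qed.

Lemma point_values_1 {n} (v : Fin.t n -> R) : In 1 (point_values v).
Proof. right; left; reflexivity. Qed.

Lemma point_values_compl {n} (v : Fin.t n -> R) x :
  In x (point_values v) -> In (1 - x) (point_values v).
Proof.
  unfold point_values; simpl. intros [<-|[<-|Hx]].
  - right; left; ring.
  - left; ring.
  - right; right. apply in_flat_map in Hx as (i & Hi & Hx).
    apply in_flat_map. exists i; split; auto.
    destruct Hx as [<-|[<-|[]]]; simpl; [right; left | left; ring]; auto.
Qed.

Lemma point_values_compl_perm {n} (v : Fin.t n -> R) :
  Permutation (map (fun t => 1 - t) (point_values v)) (point_values v).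
Proof.
  unfold point_values; simpl. rewrite Rminus_0_r, Rminus_diag.
  eapply perm_trans; [apply perm_swap|]. apply perm_skip, perm_skip.
  induction (enum_fin n) as [|i l IH]; simpl; auto.
  replace (1 - (1 - v i)) with (v i) by ring.
  eapply perm_trans; [apply perm_swap|]. apply perm_skip, perm_skip, IH.
Qed.

Lemma eval_in_point_values {n} (v : Fin.t n -> R) f : In (eval v f) (point_values v).
Proof.
  induction f; cbn [eval].
  - right; right. apply in_flat_map. exists t; split; [apply enum_fin_complete | left; auto].
  - apply point_values_0.
  - apply point_values_1.
  - unfold Rmin; destruct Rle_dec; auto.
  - unfold Rmax; destruct Rle_dec; auto.
  - unfold nm_mul, Rmin; case_R; auto using point_values_0.
  - unfold nm_imp, Rmax; case_R; auto using point_values_1, point_values_compl.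
Qed.

Lemma eval_unit {n} (v : Fin.t n -> R) f : unit_cube v -> 0 <= eval v f <= 1.
Proof.
  intros Hv. pose proof (eval_in_point_values v f) as Hf.
  unfold point_values in Hf; simpl in Hf.
  destruct Hf as [<-|[<-|Hf]]; try lra.
  apply in_flat_map in Hf as (i & _ & Hf). specialize (Hv i).
  destruct Hf as [<-|[<-|[]]]; lra.
Qed.

Lemma eval_ext {n} (v w : Fin.t n -> R) f : (forall i, v i = w i) -> eval v f = eval w f.
Proof. intros H; induction f; simpl; rewrite ?IHf1, ?IHf2; auto. Qed.

(** * Relabelling the values of a point *)

Section Relabelling.

Variables (S : R -> Prop) (psi : R -> R).
Hypothesis S_compl : forall x, S x -> S (1 - x).
Hypothesis psi_lt : forall x y, S x -> S y -> x < y -> psi x < psi y.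
Hypothesis psi_compl : forall x, psi (1 - x) = 1 - psi x.
Hypothesis psi_0 : psi 0 = 0.
Hypothesis psi_1 : psi 1 = 1.

Lemma psi_le_iff x y : S x -> S y -> (x <= y <-> psi x <= psi y).
Proof.
  intros Hx Hy; split; intro H.
  - destruct (Rle_lt_or_eq_dec _ _ H) as [Hlt|<-]; [apply Rlt_le; auto | lra].
  - destruct (Rle_dec x y) as [|Hyx]; auto.
    pose proof (psi_lt y x Hy Hx (Rnot_le_lt _ _ Hyx)). lra.
Qed.

Lemma psi_lt_iff x y : S x -> S y -> (x < y <-> psi x < psi y).
Proof. intros Hx Hy. pose proof (psi_le_iff y x Hy Hx). lra. Qed.

Lemma psi_Rmin x y : S x -> S y -> psi (Rmin x y) = Rmin (psi x) (psi y).
Proof.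
  intros Hx Hy. pose proof (psi_le_iff x y Hx Hy).
  unfold Rmin; destruct (Rle_dec x y), (Rle_dec (psi x) (psi y)); tauto.
Qed.

Lemma psi_Rmax x y : S x -> S y -> psi (Rmax x y) = Rmax (psi x) (psi y).
Proof.
  intros Hx Hy. pose proof (psi_le_iff x y Hx Hy).
  unfold Rmax; destruct (Rle_dec x y), (Rle_dec (psi x) (psi y)); tauto.
Qed.

Lemma psi_nm_mul x y : S x -> S y -> psi (nm_mul x y) = nm_mul (psi x) (psi y).
Proof.
  intros Hx Hy.
  assert (Hsum : 1 < x + y <-> 1 < psi x + psi y).
  { pose proof (psi_lt_iff (1 - y) x (S_compl y Hy) Hx). rewrite psi_compl in *. lra. }
  unfold nm_mul; destruct (Rlt_dec 1 (x + y)), (Rlt_dec 1 (psi x + psi y));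
    [apply psi_Rmin | tauto | tauto | exact psi_0]; auto.
Qed.

Lemma psi_nm_imp x y : S x -> S y -> psi (nm_imp x y) = nm_imp (psi x) (psi y).
Proof.
  intros Hx Hy. pose proof (psi_le_iff x y Hx Hy).
  unfold nm_imp; destruct (Rle_dec x y), (Rle_dec (psi x) (psi y)); try tauto.
  rewrite psi_Rmax, psi_compl; auto.
Qed.

End Relabelling.

Lemma eval_relabel {n} (v : Fin.t n -> R) (psi : R -> R) :
  (forall x y, In x (point_values v) -> In y (point_values v) -> x < y -> psi x < psi y) ->
  (forall x, psi (1 - x) = 1 - psi x) -> psi 0 = 0 -> psi 1 = 1 ->
  forall f, eval (fun i => psi (v i)) f = psi (eval v f).
Proof.
  intros Hlt Hc H0 H1 f.
  set (S x := In x (point_values v)).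
  assert (HS : forall g, S (eval v g)) by apply eval_in_point_values.
  assert (Sc : forall x, S x -> S (1 - x)) by apply point_values_compl.
  induction f; simpl; rewrite ?IHf1, ?IHf2; auto.
  - symmetry; apply (psi_Rmin S); auto.
  - symmetry; apply (psi_Rmax S); auto.
  - symmetry; apply (psi_nm_mul S); auto.
  - symmetry; apply (psi_nm_imp S); auto.
Qed.

(* Counting both strict and weak predecessors makes [drank L (1 - x) + drank L x]
   constant when [L] is closed under [t |-> 1 - t] (lemma [drank_compl]). *)
Fixpoint drank (L : list R) (x : R) : nat :=
  match L with
  | [] => O
  | t :: L' =>
      ((if Rlt_dec t x then 1 else 0) + (if Rle_dec t x then 1 else 0) + drank L' x)%nat
  end.

Lemma drank_le L x y : x <= y -> (drank L x <= drank L y)%nat.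
Proof. intro H; induction L; simpl; auto. case_R; try lra; lia. Qed.

Lemma drank_lt L x y : x < y -> In y L -> (drank L x < drank L y)%nat.
Proof.
  intros H Hy; induction L as [|t L IH]; simpl in *; [tauto|].
  destruct Hy as [->|Hy].
  - pose proof (drank_le L x y (Rlt_le _ _ H)). case_R; try lra; lia.
  - specialize (IH Hy). case_R; try lra; lia.
Qed.

Lemma drank_le_length L x : (drank L x <= 2 * length L)%nat.
Proof. induction L; simpl; auto. case_R; lia. Qed.

Lemma drank_perm L L' x : Permutation L L' -> drank L x = drank L' x.
Proof. induction 1; simpl; lia. Qed.

Lemma drank_compl (L : list R) (x : R) :
  (drank (map (fun t => (1 - t)%R) L) (1 - x)%R + drank L x = 2 * length L)%nat.
Proof. induction L; simpl; auto. case_R; try lra; lia. Qed.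

Definition relabel {n} (v : Fin.t n -> R) (x : R) : R :=
  let r := fun y => INR (drank (point_values v) y) in (r x - r 0) / (r 1 - r 0).

Lemma relabel_props {n} (v : Fin.t n -> R) :
  (forall x y, In x (point_values v) -> In y (point_values v) -> x < y ->
     relabel v x < relabel v y) /\
  (forall x, relabel v (1 - x) = 1 - relabel v x) /\ relabel v 0 = 0 /\ relabel v 1 = 1.
Proof.
  set (L := point_values v).
  assert (Hden : INR (drank L 0) < INR (drank L 1))
    by exact (lt_INR _ _ (drank_lt L 0 1 Rlt_0_1 (point_values_1 v))).
  assert (Hsym : forall x, (drank L (1 - x) + drank L x = 2 * length L)%nat).
  { intro x. rewrite <- (drank_perm _ _ _ (point_values_compl_perm v)). apply drank_compl. }
  unfold relabel; fold L; repeat split.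
  - intros x y _ Hy Hxy. apply Rmult_lt_compat_r; [apply Rinv_0_lt_compat; lra|].
    pose proof (lt_INR _ _ (drank_lt L x y Hxy Hy)). lra.
  - intro x. pose proof (f_equal INR (Hsym x)) as A. pose proof (f_equal INR (Hsym 0)) as B.
    rewrite Rminus_0_r in B. rewrite plus_INR in A, B. field_simplify_eq; lra.
  - field; lra.
  - field; lra.
Qed.

(** * Finitely many points decide equivalence *)

Fixpoint all_functions (n : nat) (A : list R) : list (Fin.t n -> R) :=
  match n with
  | O => [fun i => Fin.case0 (fun _ => R) i]
  | S m => flat_map (fun a =>
             map (fun g => fun i => Fin.caseS' i (fun _ => R) a g) (all_functions m A)) A
  end.

Lemma all_functions_complete n A (f : Fin.t n -> R) :
  (forall i, In (f i) A) -> exists g, In g (all_functions n A) /\ forall i, g i = f i.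
Proof.
  revert f; induction n as [|n IH]; intros f Hf.
  - exists (fun i => Fin.case0 (fun _ => R) i). split; [left; reflexivity|].
    intro i; apply (Fin.case0 (fun i => _ = f i) i).
  - destruct (IH (fun i => f (Fin.FS i))) as (g & Hg & Hgi); [intro; apply Hf|].
    exists (fun i => Fin.caseS' i (fun _ => R) (f Fin.F1) g). split.
    + apply in_flat_map. exists (f Fin.F1). split; [apply Hf|].
      apply (in_map (fun g0 => fun i => Fin.caseS' i (fun _ => R) (f Fin.F1) g0)); auto.
    + intro i. refine (Fin.caseS' i (fun i => _ = f i) _ _); simpl; auto.
Qed.

(* The relabelled values [relabel v x] are ratios of ranks bounded by
   [2 * length (point_values v) = 4n + 4]. *)
Definition grid (n : nat) : list R :=
  let ranks := seq 0 (S (4 * n + 4)) in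
  flat_map (fun a => flat_map (fun b =>
    map (fun c => (INR a - INR b) / (INR c - INR b)) ranks) ranks) ranks.

Definition grid_points (n : nat) : list (Fin.t n -> R) := all_functions n (grid n).

Lemma relabel_in_grid {n} (v : Fin.t n -> R) x : In (relabel v x) (grid n).
Proof.
  assert (Hr : forall y, In (drank (point_values v) y) (seq 0 (S (4 * n + 4)))).
  { intro y. apply in_seq. pose proof (drank_le_length (point_values v) y).
    rewrite point_values_length in *. lia. }
  unfold grid, relabel.
  apply in_flat_map; eexists; split; [apply Hr|].
  apply in_flat_map; eexists; split; [apply Hr|].
  apply in_map with (f := fun c => _ / (INR c - _)), Hr.
Qed.

Theorem equiv_of_grid {n} (f g : form n) :
  (forall p, In p (grid_points n) -> eval p f = eval p g) -> equiv f g.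
Proof.
  intros H v _.
  destruct (relabel_props v) as (Hlt & Hc & H0 & H1).
  destruct (all_functions_complete n (grid n) (fun i => relabel v (v i))) as (p & Hp & Hpi).
  { intro; apply relabel_in_grid. }
  specialize (H p Hp). rewrite !(eval_ext p _ _ Hpi), !(eval_relabel v (relabel v)) in H; auto.
  pose proof (eval_in_point_values v f); pose proof (eval_in_point_values v g).
  destruct (Rtotal_order (eval v f) (eval v g)) as [E|[E|E]]; auto;
    apply Hlt in E; auto; lra.
Qed.

(** * The finite lattice NM_n *)

Lemma equiv_refl {n} (f : form n) : equiv f f.
Proof. intros v _; reflexivity. Qed.

Lemma equiv_sym {n} (f g : form n) : equiv f g -> equiv g f.
Proof. intros H v Hv; symmetry; auto. Qed.

Lemma equiv_trans {n} (f g h : form n) : equiv f g -> equiv g h -> equiv f h.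
Proof. intros H1 H2 v Hv; rewrite H1, H2; auto. Qed.

Definition fle {n} (f g : form n) : Prop := forall v, unit_cube v -> eval v f <= eval v g.
Definition flt {n} (f g : form n) : Prop := fle f g /\ ~ equiv f g.

Lemma fle_antisym {n} (f g : form n) : fle f g -> fle g f -> equiv f g.
Proof. intros H1 H2 v Hv. apply Rle_antisym; auto. Qed.

Lemma fle_trans {n} (f g h : form n) : fle f g -> fle g h -> fle f h.
Proof. intros H1 H2 v Hv. eapply Rle_trans; eauto. Qed.

Lemma fle_of_equiv {n} (f g : form n) : equiv f g -> fle f g.
Proof. intros H v Hv; rewrite H; auto; lra. Qed.

Lemma fle_flt_trans {n} (f g h : form n) : fle f g -> flt g h -> flt f h.
Proof.
  intros Hfg [Hgh Ngh]. split; [eapply fle_trans; eauto|].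
  intro E. apply Ngh, fle_antisym; auto. eapply fle_trans; [apply fle_of_equiv, equiv_sym, E|auto].
Qed.

Lemma flt_irrefl {n} (f : form n) : ~ flt f f.
Proof. intros [_ N]; apply N, equiv_refl. Qed.

Lemma fle_And {n} (k f g : form n) : fle k (And f g) <-> fle k f /\ fle k g.
Proof.
  unfold fle; split.
  - intros H; split; intros v Hv; specialize (H v Hv); nm_arith.
  - intros [H1 H2] v Hv. specialize (H1 v Hv); specialize (H2 v Hv). nm_arith.
Qed.

(* Join-irreducibles are join-prime, by distributivity of min over max. *)
Lemma fle_Or_ji {n} (k f g : form n) :
  join_irreducible k -> fle k (Or f g) <-> fle k f \/ fle k g.
Proof.
  intros [_ Hk]. split.
  - intros H. destruct (Hk (And k f) (And k g)) as [E|E].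
    + intros v Hv. specialize (H v Hv). nm_arith.
    + left. intros v Hv. rewrite (E v Hv). nm_arith.
    + right. intros v Hv. rewrite (E v Hv). nm_arith.
  - intros [H|H] v Hv; specialize (H v Hv); nm_arith.
Qed.

Lemma ji_equiv {n} (f g : form n) : equiv f g -> join_irreducible f -> join_irreducible g.
Proof.
  intros E [N H]. split.
  - intro E2; apply N; eapply equiv_trans; eauto.
  - intros a b E2. destruct (H a b) as [H1|H1]; [eapply equiv_trans; eauto | left | right];
      eapply equiv_trans; [apply equiv_sym, E | exact H1 | apply equiv_sym, E | exact H1].
Qed.

Lemma idempotent_equiv {n} (f g : form n) : equiv f g -> idempotent f -> idempotent g.
Proof. intros E H v Hv. simpl. rewrite <- !E by auto. apply H; auto. Qed.

Definition decide (P : Prop) : bool := if excluded_middle_informative P then true else false.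

Lemma decide_true P : decide P = true <-> P.
Proof. unfold decide; destruct excluded_middle_informative; split; auto; discriminate. Qed.

Definition grid_values {n} (f : form n) : list R := map (fun p => eval p f) (grid_points n).

Fixpoint cartesian (As : list (list R)) : list (list R) :=
  match As with
  | [] => [[]]
  | A :: As' => flat_map (fun a => map (cons a) (cartesian As')) A
  end.

Lemma cartesian_complete t As : Forall2 (@In R) t As -> In t (cartesian As).
Proof.
  induction 1; simpl; auto. apply in_flat_map. exists x; split; auto. apply in_map; auto.
Qed.

Definition reps (n : nat) : list (form n) :=
  map (fun t => epsilon (inhabits (@Bot n)) (fun f => grid_values f = t))
      (cartesian (map point_values (grid_points n))).

Lemma reps_cover {n} (f : form n) : exists r, In r (reps n) /\ equiv f r.
Proof.
  set (r := epsilon (inhabits (@Bot n)) (fun g => grid_values g = grid_values f)).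
  assert (Hr : grid_values r = grid_values f) by (apply epsilon_spec; exists f; auto).
  exists r; split.
  - apply (in_map (fun t => epsilon (inhabits (@Bot n)) (fun g => grid_values g = t))).
    apply cartesian_complete. unfold grid_values.
    induction (grid_points n); simpl; constructor; auto using eval_in_point_values.
  - apply equiv_of_grid. intros p Hp. symmetry. exact (proj1 map_ext_in_iff Hr p Hp).
Qed.

Lemma filter_length_mono {A} (l : list A) p q : (forall x, In x l -> p x = true -> q x = true) ->
  (length (filter p l) <= length (filter q l))%nat.
Proof.
  induction l as [|a l IH]; simpl; intros H; auto.
  specialize (IH (fun x Hx => H x (or_intror Hx))).
  destruct (p a) eqn:E1, (q a) eqn:E2; simpl; try lia.
  specialize (H a (or_introl eq_refl) E1); congruence.
Qed.

Lemma filter_length_strict {A} (l : list A) p q :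
  (forall x, In x l -> p x = true -> q x = true) ->
  (exists x, In x l /\ q x = true /\ p x = false) ->
  (length (filter p l) < length (filter q l))%nat.
Proof.
  induction l as [|a l IH]; simpl; intros H (x & Hx & Hq & Hp); [tauto|].
  pose proof (filter_length_mono l p q (fun x Hx => H x (or_intror Hx))).
  destruct Hx as [<-|Hx]; [rewrite Hq, Hp; simpl; lia|].
  assert (length (filter p l) < length (filter q l))%nat by (apply IH; eauto).
  destruct (p a) eqn:E1, (q a) eqn:E2; simpl; try lia.
  specialize (H a (or_introl eq_refl) E1); congruence.
Qed.

Definition height {n} (f : form n) : nat :=
  length (filter (fun r => decide (fle r f)) (reps n)).

Lemma height_le {n} (f : form n) : (height f <= length (reps n))%nat.
Proof. apply filter_length_le. Qed.

Lemma height_lt {n} (f g : form n) : flt f g -> (height f < height g)%nat.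
Proof.
  intros [Hfg Nfg]. apply filter_length_strict.
  - intros r _. rewrite !decide_true. intro H. eapply fle_trans; eauto.
  - destruct (reps_cover g) as (r & Hr & E). exists r. split; [auto|split].
    + apply decide_true, fle_of_equiv, equiv_sym, E.
    + apply not_true_is_false. rewrite decide_true. intro H. apply Nfg, fle_antisym; auto.
      eapply fle_trans; [apply fle_of_equiv; exact E | exact H].
Qed.

Fixpoint dedup_equiv {n} (l : list (form n)) : list (form n) :=
  match l with
  | [] => []
  | a :: l' => if excluded_middle_informative (exists b, In b l' /\ equiv a b)
               then dedup_equiv l' else a :: dedup_equiv l'
  end.

Definition pairwise_inequiv {n} (l : list (form n)) : Prop :=
  ForallOrdPairs (fun a b => ~ equiv a b) l.

Lemma dedup_equiv_incl {n} (l : list (form n)) x : In x (dedup_equiv l) -> In x l.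
Proof.
  induction l; simpl; auto. destruct excluded_middle_informative; simpl; intuition.
Qed.

Lemma dedup_equiv_cover {n} (l : list (form n)) x :
  In x l -> exists y, In y (dedup_equiv l) /\ equiv x y.
Proof.
  revert x; induction l as [|a l IH]; simpl; [tauto|]. intros x Hx.
  destruct excluded_middle_informative as [(b & Hb & Eb)|N].
  - destruct Hx as [<-|Hx]; auto. destruct (IH b Hb) as (y & Hy & Ey).
    exists y; split; auto. eapply equiv_trans; eauto.
  - destruct Hx as [<-|Hx].
    + exists a; split; [left; auto | apply equiv_refl].
    + destruct (IH x Hx) as (y & Hy & Ey); exists y; split; [right|]; auto.
Qed.

Lemma dedup_equiv_pairwise {n} (l : list (form n)) : pairwise_inequiv (dedup_equiv l).
Proof.
  induction l; simpl; [constructor|]. destruct excluded_middle_informative as [_|N]; auto.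
  constructor; auto. apply Forall_forall. intros y Hy E. apply N. exists y; split; auto.
  eapply dedup_equiv_incl; eauto.
Qed.

Lemma pairwise_inequiv_filter {n} (l : list (form n)) p :
  pairwise_inequiv l -> pairwise_inequiv (filter p l).
Proof.
  induction 1 as [|a l H _ IH]; simpl; [constructor|]. destruct (p a); auto. constructor; auto.
  apply Forall_forall. intros y Hy. apply filter_In in Hy. rewrite Forall_forall in H.
  apply H; tauto.
Qed.

Definition ji_reps (n : nat) : list (form n) :=
  filter (fun r => decide (join_irreducible r)) (dedup_equiv (reps n)).

Lemma ji_reps_ji {n} (j : form n) : In j (ji_reps n) -> join_irreducible j.
Proof. unfold ji_reps; intros H; apply filter_In in H. apply decide_true; tauto. Qed.

Lemma ji_reps_pairwise n : pairwise_inequiv (ji_reps n).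
Proof. apply pairwise_inequiv_filter, dedup_equiv_pairwise. Qed.

Lemma ji_reps_cover {n} (g : form n) :
  join_irreducible g -> exists j, In j (ji_reps n) /\ equiv g j.
Proof.
  intros Hg. destruct (reps_cover g) as (r & Hr & Er).
  destruct (dedup_equiv_cover _ _ Hr) as (j & Hj & Ej).
  assert (E : equiv g j) by (eapply equiv_trans; eauto).
  exists j; split; auto. apply filter_In; split; auto. apply decide_true. eapply ji_equiv; eauto.
Qed.

(** * Moebius inversion *)

Definition indicator (P : Prop) : R := if excluded_middle_informative P then 1 else 0.

Lemma indicator_iff (P Q : Prop) : (P <-> Q) -> indicator P = indicator Q.
Proof. unfold indicator; intros; do 2 destruct excluded_middle_informative; tauto. Qed.

Definition rsum (l : list R) : R := fold_right Rplus 0 l.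

Lemma rsum_ext {A} (l : list A) f g :
  (forall x, In x l -> f x = g x) -> rsum (map f l) = rsum (map g l).
Proof. intros H; f_equal; apply map_ext_in; auto. Qed.

Lemma rsum_plus {A} (l : list A) f g :
  rsum (map f l) + rsum (map g l) = rsum (map (fun x => f x + g x) l).
Proof. induction l; simpl; [ring | rewrite <- IHl; ring]. Qed.

Lemma rsum_zero {A} (l : list A) f : (forall x, In x l -> f x = 0) -> rsum (map f l) = 0.
Proof. induction l; simpl; intros H; auto. rewrite H, IHl; auto. ring. Qed.

Fixpoint mobius_fuel {n} (m : nat) (j : form n) : R :=
  match m with
  | O => 0
  | S m' => indicator (idempotent j)
            - rsum (map (fun k => indicator (flt k j) * mobius_fuel m' k) (ji_reps n))
  end.

Lemma mobius_fuel_stable {n} m : forall (j : form n),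
  (height j < m)%nat -> forall m', (m <= m')%nat -> mobius_fuel m' j = mobius_fuel m j.
Proof.
  induction m as [|m IH]; intros j Hj m' Hm; [lia|]. destruct m' as [|m']; [lia|].
  simpl. f_equal. apply rsum_ext. intros k _. destruct (classic (flt k j)) as [L|L].
  - pose proof (height_lt k j L). rewrite (IH k); auto; lia.
  - unfold indicator; destruct excluded_middle_informative; [contradiction | ring].
Qed.

Definition mobius {n} (j : form n) : R := mobius_fuel (S (length (reps n))) j.

Lemma mobius_eq {n} (j : form n) :
  mobius j = indicator (idempotent j)
             - rsum (map (fun k => indicator (flt k j) * mobius k) (ji_reps n)).
Proof.
  unfold mobius.
  rewrite <- (mobius_fuel_stable (S (length (reps n))) j) with (m' := S (S (length (reps n)))).
  - reflexivity.
  - pose proof (height_le j); lia.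
  - lia.
Qed.

Lemma sum_fle_split {n} (l : list (form n)) c j : pairwise_inequiv l -> In j l ->
  rsum (map (fun k => indicator (fle k j) * c k) l)
  = c j + rsum (map (fun k => indicator (flt k j) * c k) l).
Proof.
  assert (Hlt : forall k, ~ equiv k j -> indicator (fle k j) = indicator (flt k j))
    by (intros; apply indicator_iff; unfold flt; tauto).
  induction 1 as [|a l Ha Hl IH]; simpl; intros Hj; [tauto|]. rewrite Forall_forall in Ha.
  destruct Hj as [<-|Hj].
  - rewrite (rsum_ext l _ (fun k => indicator (flt k a) * c k)).
    + rewrite (indicator_iff (fle a a) True), (indicator_iff (flt a a) False).
      * unfold indicator; do 2 destruct excluded_middle_informative; tauto || ring.
      * pose proof (flt_irrefl a); tauto.
      * split; auto; intros _; apply fle_of_equiv, equiv_refl.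
    + intros k Hk. rewrite Hlt; auto. intro E; apply (Ha k Hk), equiv_sym, E.
  - rewrite IH, Hlt by auto. ring.
Qed.

Definition chi_plus {n} (f : form n) : R :=
  rsum (map (fun k => indicator (fle k f) * mobius k) (ji_reps n)).

Lemma chi_plus_equiv {n} (f g : form n) : equiv f g -> chi_plus f = chi_plus g.
Proof.
  intros E. apply rsum_ext. intros k _. f_equal. apply indicator_iff.
  split; intros H; eapply fle_trans; eauto using fle_of_equiv, equiv_sym.
Qed.

Lemma chi_plus_modular {n} (f g : form n) :
  chi_plus f + chi_plus g = chi_plus (Or f g) + chi_plus (And f g).
Proof.
  unfold chi_plus. rewrite !rsum_plus. apply rsum_ext. intros k Hk.
  rewrite (indicator_iff _ _ (fle_Or_ji k f g (ji_reps_ji k Hk))),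
          (indicator_iff _ _ (fle_And k f g)).
  unfold indicator. repeat destruct excluded_middle_informative; tauto || ring.
Qed.

Lemma chi_plus_Bot n : @chi_plus n Bot = 0.
Proof.
  apply rsum_zero. intros k Hk. unfold indicator.
  destruct excluded_middle_informative as [H|H]; [|ring]. exfalso.
  apply (proj1 (ji_reps_ji k Hk)), fle_antisym; auto.
  intros v Hv. apply (eval_unit v k Hv).
Qed.

Lemma chi_plus_ji {n} (g : form n) :
  join_irreducible g -> chi_plus g = indicator (idempotent g).
Proof.
  intros Hg. destruct (ji_reps_cover g Hg) as (j & Hj & E).
  rewrite (chi_plus_equiv g j E), (indicator_iff (idempotent g) (idempotent j))
    by (split; apply idempotent_equiv; auto using equiv_sym).
  unfold chi_plus. rewrite (sum_fle_split _ mobius j (ji_reps_pairwise n) Hj), (mobius_eq j).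
  ring.
Qed.

Lemma chi_plus_is_chi_plus n : is_chi_plus (@chi_plus n).
Proof.
  split; [split; [apply chi_plus_equiv | apply chi_plus_modular]|].
  split; [apply chi_plus_Bot|].
  split; intros g Hg Hi; rewrite chi_plus_ji by auto;
    unfold indicator; destruct excluded_middle_informative; tauto.
Qed.

(** * Elements below 1/2 *)

Definition below_half {n} (z : form n) : Prop := forall v, unit_cube v -> eval v z <= 1/2.

Lemma below_half_fle {n} (a z : form n) : fle a z -> below_half z -> below_half a.
Proof. intros H Hz v Hv. specialize (H v Hv); specialize (Hz v Hv). lra. Qed.

Lemma below_half_not_idempotent {n} (z : form n) :
  ~ equiv z Bot -> below_half z -> ~ idempotent z.
Proof.
  intros NB Hz I. apply NB. intros v Hv. rewrite <- (I v Hv).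
  specialize (Hz v Hv). nm_arith.
Qed.

Lemma not_ji_decompose {n} (z : form n) : ~ equiv z Bot -> ~ join_irreducible z ->
  exists a b, flt a z /\ flt b z /\ equiv z (Or a b).
Proof.
  intros NB NJ.
  apply NNPP; intro Cn; apply NJ; split; auto; intros a b E.
  assert (Ha : fle a z) by (intros v Hv; rewrite (E v Hv); apply Rmax_l).
  assert (Hb : fle b z) by (intros v Hv; rewrite (E v Hv); apply Rmax_r).
  destruct (classic (equiv z a)) as [|Na]; auto. destruct (classic (equiv z b)) as [|Nb]; auto.
  exfalso; apply Cn; exists a, b.
  unfold flt; repeat split; auto; intro; [apply Na | apply Nb]; apply equiv_sym; auto.
Qed.

Lemma is_chi_plus_below_half {n} (nu : form n -> R) :
  is_chi_plus nu -> forall z, below_half z -> nu z = 0.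
Proof.
  intros [[nu_equiv nu_modular] [nu_Bot [_ nu_nonidem]]] z.
  remember (height z) as h eqn:Hh. revert z Hh.
  induction h as [h IH] using lt_wf_ind. intros z -> Hz.
  destruct (classic (equiv z Bot)) as [EB|NB]; [rewrite (nu_equiv _ _ EB); auto|].
  destruct (classic (join_irreducible z)) as [JZ|NJ].
  { apply nu_nonidem; auto. apply below_half_not_idempotent; auto. }
  destruct (not_ji_decompose z NB NJ) as (a & b & Ha & Hb & E).
  assert (Hab : flt (And a b) z)
    by (eapply fle_flt_trans; [|exact Ha]; apply (fle_And (And a b) a b), fle_of_equiv, equiv_refl).
  assert (Hbelow : forall c, flt c z -> below_half c)
    by (intros c [Hc _]; eapply below_half_fle; eauto).
  pose proof (nu_modular a b) as M. rewrite <- (nu_equiv _ _ E) in M.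
  rewrite (IH _ (height_lt _ _ Ha) a eq_refl (Hbelow a Ha)),
    (IH _ (height_lt _ _ Hb) b eq_refl (Hbelow b Hb)),
    (IH _ (height_lt _ _ Hab) _ eq_refl (Hbelow _ Hab)) in M.
  lra.
Qed.

Lemma is_chi_plus_Mul_self {n} (nu : form n -> R) (x : form n) :
  is_chi_plus nu -> nu (Mul x x) = nu x.
Proof.
  intros C. pose proof C as [[nu_equiv nu_modular] _].
  set (g := And x (Imp x Bot)).
  assert (E : equiv (Or (Mul x x) g) x)
    by (intros v Hv; pose proof (eval_unit v x Hv); nm_arith).
  assert (Hg : below_half g) by (intros v Hv; pose proof (eval_unit v x Hv); nm_arith).
  assert (Hxg : below_half (And (Mul x x) g))
    by (apply (below_half_fle _ g); auto; intros v Hv; nm_arith).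
  pose proof (nu_modular (Mul x x) g) as M.
  rewrite (nu_equiv _ _ E), (is_chi_plus_below_half nu C g Hg),
    (is_chi_plus_below_half nu C _ Hxg) in M.
  lra.
Qed.

Theorem proposition2 (n : nat) (Hn : (1 <= n)%nat) :
  (exists nu : form n -> R, is_chi_plus nu) /\
  (forall nu : form n -> R, is_chi_plus nu ->
     forall x : form n, nu (Mul x x) = nu x).
Proof.
  split.
  - exists chi_plus. apply chi_plus_is_chi_plus.
  - intros nu C x. apply is_chi_plus_Mul_self, C.
Qed.
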